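(* Let $\alpha,\beta\in\mathbb{C}$ be constants and $h,g:\mathbb{Z}^2\to\mathbb{C}$ satisfy $\widehat{h}-\widetilde{h}=\widetilde{\widetilde{g}}-g$ and $(h+\widetilde g)g=\beta^2-\alpha^2$. For $p$ in an open set, let $\varphi_1=\varphi_1(n,m;p)$, $\varphi_2=\varphi_2(n,m;p)$ be two linearly independent solutions of $$\widetilde{\widetilde{\varphi}}+h\,\widetilde{\varphi}+\alpha^2\varphi=p^2\varphi,\qquad \widehat{\varphi}=\widetilde{\varphi}-g\,\varphi,$$ depending differentiably on $p$, and write $\varphi_{\ell,p}=\partial\varphi_\ell/\partial p$. Let $s^2=\alpha^2-p^2$, $t^2=\beta^2-p^2$, and let $\rho$ be the constant with $\varphi_1\widetilde\varphi_2-\varphi_2\widetilde\varphi_1=\rho\,s^{2n}t^{2m}$. For constants $A,B,D$ define $$\chi=A\,x_{11}+B\,(x_{12}+x_{21})+D\,x_{22},\qquad x_{ij}=\varphi_i\widetilde{\varphi}_{j,p}-\widetilde{\varphi}_j\varphi_{i,p}\ (i,j=1,2).$$ Then $$s^4\chi\widehat{\chi}+\widetilde{\chi}\widehat{\widetilde{\chi}}-t^4\chi\widetilde{\chi}-\widehat{\chi}\widehat{\widetilde{\chi}}=(\alpha^2-\beta^2)\Big(\chi\widehat{\widetilde{\chi}}+\widetilde{\chi}\widehat{\chi}+4p^2\delta\,s^{4n}t^{4m}\Big),\qquad \delta=\rho^2(AD-B^2).$$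
   Context: Shift notation: for a function $f$ on $\mathbb{Z}^2$ (variables $n,m$), $\widetilde f(n,m)=f(n+1,m)$, $\widehat f(n,m)=f(n,m+1)$, and combined accents denote composed shifts; $h,g,\alpha,\beta$ do not depend on $p$. *)

From HB Require Import structures.
From mathcomp Require Import all_boot all_order all_algebra.
From mathcomp Require Import complex.
From mathcomp Require Import all_classical all_reals all_analysis.
Set Implicit Arguments. Unset Strict Implicit. Unset Printing Implicit Defensive.
Import Order.TTheory GRing.Theory Num.Theory.
Local Open Scope ring_scope.

Definition Cx (R : realType) : numFieldType := R[i].

Definition xij (R : realType) (fi fj : int -> int -> Cx R -> Cx R)
    (n m : int) (p : Cx R) : Cx R :=
  fi n m p * derive1 (fj (n + 1) m : (Cx R)^o -> (Cx R)^o) p - fj (n + 1) m p * derive1 (fi n m : (Cx R)^o -> (Cx R)^o) p.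

Definition chi (R : realType) (A B D : Cx R) (f1 f2 : int -> int -> Cx R -> Cx R)
    (n m : int) (p : Cx R) : Cx R :=
  A * xij f1 f1 n m p + B * (xij f1 f2 n m p + xij f2 f1 n m p)
  + D * xij f2 f2 n m p.

From HB Require Import structures.
From mathcomp Require Import all_boot all_order all_algebra.
From mathcomp Require Import complex.
From mathcomp Require Import all_classical all_reals all_analysis.
From mathcomp Require Import ring.
Import Order.TTheory GRing.Theory Num.Theory.
Local Open Scope ring_scope.
Local Open Scope classical_set_scope.

(* Write Phi = (phi1, phi2) and let Q be the symmetric bilinear form with Gram matrix
   [[A, B], [B, D]]; then chi = Q(Phi, d_p Phi~) - Q(Phi~, d_p Phi).  Bilinearity and the
   two recurrences, differentiated in p, give the first-order shift rules
     chi~ = s^2 chi + 2p Q(Phi~, Phi),   chi^ = t^2 chi + 2p Q(Phi, Phi^),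
   where (h + g~) g = beta^2 - alpha^2 turns s^2 + g (h + g~) into t^2.  Substituted into
   the claim, everything becomes a polynomial identity in chi, Q(Phi, Phi), Q(Phi, Phi~),
   Q(Phi~, Phi~), and the Gram determinant
     Q(Phi, Phi) Q(Phi~, Phi~) - Q(Phi, Phi~)^2 = (AD - B^2) (phi1 phi2~ - phi2 phi1~)^2
   produces the delta term. *)

Section BilinearForm.
Context {F : comPzRingType}.
Variables (A B D : F).
Implicit Types (u v w du dv : F^o * F^o) (a s p : F).

Definition bform u v : F :=
  A * (u.1 * v.1) + B * (u.1 * v.2 + u.2 * v.1) + D * (u.2 * v.2).

Definition bwronskian u v du dv : F := bform u dv - bform v du.

Lemma bwronskianE u v du dv :
  bwronskian u v du dv
  = A * (u.1 * dv.1 - v.1 * du.1) + B * ((u.1 * dv.2 - v.2 * du.1) + (u.2 * dv.1 - v.1 * du.2))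
    + D * (u.2 * dv.2 - v.2 * du.2).
Proof. by rewrite /bwronskian /bform; ring. Qed.

Lemma bformC u v : bform u v = bform v u.
Proof. by rewrite /bform; ring. Qed.

Lemma bformBr u v w : bform u (v - w) = bform u v - bform u w.
Proof. by rewrite /bform /=; ring. Qed.

Lemma bformZr a u v : bform u (a *: v) = a * bform u v.
Proof. by rewrite /bform /= /GRing.scale /=; ring. Qed.

Lemma bform_gram u v :
  bform u u * bform v v - bform u v ^+ 2 = (A * D - B ^+ 2) * (u.1 * v.2 - u.2 * v.1) ^+ 2.
Proof. by rewrite /bform; ring. Qed.

Lemma bwronskian_step_n h s p u v du dv :
  bwronskian v (- h *: v - s *: u) dv (- h *: dv - s *: du + (2 * p) *: u)
  = s * bwronskian u v du dv + 2 * p * bform v u.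
Proof. by rewrite /bwronskian /bform /= /GRing.scale /=; ring. Qed.

Lemma bwronskian_step_m g0 g1 h s p u v du dv :
  bwronskian (v - g0 *: u) (- h *: v - s *: u - g1 *: v)
             (dv - g0 *: du) (- h *: dv - s *: du + (2 * p) *: u - g1 *: dv)
  = (s + g0 * (h + g1)) * bwronskian u v du dv + 2 * p * bform u (v - g0 *: u).
Proof. by rewrite /bwronskian /bform /= /GRing.scale /=; ring. Qed.

Lemma bform_quartic g0 g1 h u v X X1 X2 X12 s t p :
  t = s + g0 * (h + g1) ->
  X1 = s * X + 2 * p * bform v u ->
  X2 = t * X + 2 * p * bform u (v - g0 *: u) ->
  X12 = t * X1 + 2 * p * bform v (- h *: v - s *: u - g1 *: v) ->
  s ^+ 2 * X * X2 + X1 * X12 - t ^+ 2 * X * X1 - X2 * X12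
  = (s - t) * (X * X12 + X1 * X2
               + 4 * p ^+ 2 * ((A * D - B ^+ 2) * (u.1 * v.2 - u.2 * v.1) ^+ 2)).
Proof.
move=> -> -> -> ->; rewrite -bform_gram !(bformBr, bformZr) [bform v u]bformC.
ring.
Qed.

End BilinearForm.

Lemma derive1_quadratic_comb (K : numFieldType) (f f0 f1 : K^o -> K^o) (a b c p : K) :
  (\forall q \near (p : K^o), f q = a * f1 q - (c - b * q ^+ 2) * f0 q) ->
  derivable f0 p 1 -> derivable f1 p 1 ->
  derive1 f p = a * derive1 f1 p - (c - b * p ^+ 2) * derive1 f0 p + 2 * b * p * f0 p.
Proof.
move=> fE /derivableP d0 /derivableP d1.
rewrite !derive1E (near_eq_derive _ fE).
have -> : (fun q : K^o => a * f1 q - (c - b * q ^+ 2) * f0 q) =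
          cst a * f1 - (cst c - cst b * (@idfun K^o) ^+ 2) * f0 by [].
by rewrite derive_val /= /GRing.scale !fctE /=; ring.
Qed.

Definition lax_solution {K : pzRingType} (alpha : K) (h g : int -> int -> K)
    (phi : int -> int -> K -> K) (q : K) : Prop :=
  forall n m : int,
    phi (n + 2) m q + h n m * phi (n + 1) m q + alpha ^+ 2 * phi n m q = q ^+ 2 * phi n m q /\
    phi n (m + 1) q = phi (n + 1) m q - g n m * phi n m q.

Section LaxSolution.
Context {K : comPzRingType} {alpha : K} {h g : int -> int -> K} {phi : int -> int -> K -> K}.

Lemma lax_solution_step_n {q} : lax_solution alpha h g phi q -> forall n m,
  phi (n + 2) m q = - h n m * phi (n + 1) m q - (alpha ^+ 2 - q ^+ 2) * phi n m q.
Proof.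
move=> sol n m; have [E _] := sol n m.
transitivity (phi (n + 2) m q + h n m * phi (n + 1) m q + alpha ^+ 2 * phi n m q
              - h n m * phi (n + 1) m q - alpha ^+ 2 * phi n m q); first by ring.
by rewrite E; ring.
Qed.

Lemma lax_solution_step_m {q} : lax_solution alpha h g phi q -> forall n m,
  phi n (m + 1) q = phi (n + 1) m q - g n m * phi n m q.
Proof. by move=> sol n m; have [_ ->] := sol n m. Qed.

End LaxSolution.

Section LaxDerivative.
Context {K : numFieldType} {alpha : K} {h g : int -> int -> K} {phi : int -> int -> K -> K}.
Context {p : K}.
Hypothesis sol : \forall q \near (p : K^o), lax_solution alpha h g phi q.
Hypothesis phi_derivable : forall n m, derivable (phi n m : K^o -> K^o) p 1.
Local Notation dphi n m := (derive1 (phi n m : K^o -> K^o) p).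

Lemma derive1_lax_step_n n m :
  dphi (n + 2) m = - h n m * dphi (n + 1) m - (alpha ^+ 2 - p ^+ 2) * dphi n m
                    + 2 * p * phi n m p.
Proof.
rewrite (@derive1_quadratic_comb _ _ (phi n m) (phi (n + 1) m) (- h n m) 1 (alpha ^+ 2)) //.
  by rewrite mul1r mulr1.
by near=> q; rewrite mul1r; apply: (lax_solution_step_n (g := g)); near: q.
Unshelve. all: by end_near.
Qed.

Lemma derive1_lax_step_m n m :
  dphi n (m + 1) = dphi (n + 1) m - g n m * dphi n m.
Proof.
rewrite (@derive1_quadratic_comb _ _ (phi n m) (phi (n + 1) m) 1 0 (g n m)) //.
  by rewrite mul1r mul0r subr0 mulr0 !mul0r addr0.
near=> q; rewrite mul0r subr0 mul1r.
by apply: (lax_solution_step_m (alpha := alpha) (h := h)); near: q.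
Unshelve. all: by end_near.
Qed.

End LaxDerivative.

Definition phivec {K : numFieldType} (phi1 phi2 : int -> int -> K -> K) (p : K)
    (n m : int) : K^o * K^o :=
  (phi1 n m p, phi2 n m p).

Definition dphivec {K : numFieldType} (phi1 phi2 : int -> int -> K -> K) (p : K)
    (n m : int) : K^o * K^o :=
  (derive1 (phi1 n m : K^o -> K^o) p, derive1 (phi2 n m : K^o -> K^o) p).

Lemma chi_bwronskian (R : realType) (A B D : Cx R) (phi1 phi2 : int -> int -> Cx R -> Cx R)
    (n m : int) (p : Cx R) :
  chi A B D phi1 phi2 n m p
  = bwronskian A B D (phivec phi1 phi2 p n m) (phivec phi1 phi2 p (n + 1) m)
                     (dphivec phi1 phi2 p n m) (dphivec phi1 phi2 p (n + 1) m).
Proof. by rewrite bwronskianE. Qed.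

Section LaxPair.
Context {K : numFieldType} {alpha beta : K} {h g : int -> int -> K}.
Context {phi1 phi2 : int -> int -> K -> K} {p : K}.
Variables (A B D : K).
Hypothesis sol1 : \forall q \near (p : K^o), lax_solution alpha h g phi1 q.
Hypothesis sol2 : \forall q \near (p : K^o), lax_solution alpha h g phi2 q.
Hypothesis der1 : forall n m, derivable (phi1 n m : K^o -> K^o) p 1.
Hypothesis der2 : forall n m, derivable (phi2 n m : K^o -> K^o) p 1.
Hypothesis compat : forall n m, (h n m + g (n + 1) m) * g n m = beta ^+ 2 - alpha ^+ 2.
Local Notation u := (phivec phi1 phi2 p).
Local Notation du := (dphivec phi1 phi2 p).
Local Notation W n m := (bwronskian A B D (u n m) (u (n + 1) m) (du n m) (du (n + 1) m)).

Lemma phivec_step_n n m :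
  u (n + 2) m = - h n m *: u (n + 1) m - (alpha ^+ 2 - p ^+ 2) *: u n m.
Proof.
by rewrite /phivec (lax_solution_step_n (nbhs_singleton sol1))
                   (lax_solution_step_n (nbhs_singleton sol2)).
Qed.

Lemma dphivec_step_n n m :
  du (n + 2) m = - h n m *: du (n + 1) m - (alpha ^+ 2 - p ^+ 2) *: du n m + (2 * p) *: u n m.
Proof. by rewrite /dphivec (derive1_lax_step_n sol1 der1) (derive1_lax_step_n sol2 der2). Qed.

Lemma phivec_step_m n m : u n (m + 1) = u (n + 1) m - g n m *: u n m.
Proof.
by rewrite /phivec (lax_solution_step_m (nbhs_singleton sol1))
                   (lax_solution_step_m (nbhs_singleton sol2)).
Qed.

Lemma dphivec_step_m n m : du n (m + 1) = du (n + 1) m - g n m *: du n m.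
Proof. by rewrite /dphivec (derive1_lax_step_m sol1 der1) (derive1_lax_step_m sol2 der2). Qed.

Lemma bwronskian_lax_step_n n m :
  W (n + 1) m = (alpha ^+ 2 - p ^+ 2) * W n m + 2 * p * bform A B D (u (n + 1) m) (u n m).
Proof.
rewrite -[n + 1 + 1]addrA phivec_step_n dphivec_step_n.
exact: bwronskian_step_n.
Qed.

Lemma bwronskian_lax_step_m n m :
  W n (m + 1) = (beta ^+ 2 - p ^+ 2) * W n m + 2 * p * bform A B D (u n m) (u n (m + 1)).
Proof.
rewrite !phivec_step_m !dphivec_step_m -[n + 1 + 1]addrA phivec_step_n dphivec_step_n.
rewrite bwronskian_step_m; congr (_ * _ + _).
by rewrite [g n m * _]mulrC compat; ring.
Qed.

End LaxPair.

Theorem proposition4p3 (R : realType) (alpha beta : Cx R)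
    (h g : int -> int -> Cx R)
    (Hhg1 : forall n m : int,
        h n (m + 1) - h (n + 1) m = g (n + 2) m - g n m)
    (Hhg2 : forall n m : int,
        (h n m + g (n + 1) m) * g n m = beta ^+ 2 - alpha ^+ 2)
    (U : set (Cx R)^o) (HU : open U)
    (phi1 phi2 : int -> int -> Cx R -> Cx R)
    (Hsol : forall p, U p -> forall n m : int,
        (phi1 (n + 2) m p + h n m * phi1 (n + 1) m p + alpha ^+ 2 * phi1 n m p
           = p ^+ 2 * phi1 n m p) /\
        (phi1 n (m + 1) p = phi1 (n + 1) m p - g n m * phi1 n m p) /\
        (phi2 (n + 2) m p + h n m * phi2 (n + 1) m p + alpha ^+ 2 * phi2 n m p
           = p ^+ 2 * phi2 n m p) /\
        (phi2 n (m + 1) p = phi2 (n + 1) m p - g n m * phi2 n m p))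
    (Hindep : forall p, U p -> forall c1 c2 : Cx R,
        (forall n m : int, c1 * phi1 n m p + c2 * phi2 n m p = 0) ->
        c1 = 0 /\ c2 = 0)
    (Hdiff : forall p, U p -> forall n m : int,
        derivable (phi1 n m : (Cx R)^o -> (Cx R)^o) p 1 /\
        derivable (phi2 n m : (Cx R)^o -> (Cx R)^o) p 1)
    (Hst : forall p, U p -> alpha ^+ 2 - p ^+ 2 != 0 /\ beta ^+ 2 - p ^+ 2 != 0)
    (rho : Cx R -> Cx R)
    (Hrho : forall p, U p -> forall n m : int,
        phi1 n m p * phi2 (n + 1) m p - phi2 n m p * phi1 (n + 1) m p
        = rho p * (alpha ^+ 2 - p ^+ 2) ^ n * (beta ^+ 2 - p ^+ 2) ^ m)
    (A B D : Cx R) :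
  forall p, U p -> forall n m : int,
    let s2 := alpha ^+ 2 - p ^+ 2 in
    let t2 := beta ^+ 2 - p ^+ 2 in
    let X := fun a b : int => chi A B D phi1 phi2 a b p in
    let delta := rho p ^+ 2 * (A * D - B ^+ 2) in
    s2 ^+ 2 * X n m * X n (m + 1) + X (n + 1) m * X (n + 1) (m + 1)
      - t2 ^+ 2 * X n m * X (n + 1) m - X n (m + 1) * X (n + 1) (m + 1)
    = (alpha ^+ 2 - beta ^+ 2) *
      (X n m * X (n + 1) (m + 1) + X (n + 1) m * X n (m + 1)
       + 4 * p ^+ 2 * delta * s2 ^ (2 * n) * t2 ^ (2 * m)).
Proof.
move=> p Up n m s2 t2 X delta.
have U_near : \forall q \near (p : (Cx R)^o), U q by exact: open_nbhs_nbhs.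
have sol1 : \forall q \near (p : (Cx R)^o), lax_solution alpha h g phi1 q.
  by apply: filterS U_near => q Uq k l; have [? [? _]] := Hsol q Uq k l.
have sol2 : \forall q \near (p : (Cx R)^o), lax_solution alpha h g phi2 q.
  by apply: filterS U_near => q Uq k l; have [_ [_ ?]] := Hsol q Uq k l.
have der1 k l := (Hdiff p Up k l).1.
have der2 k l := (Hdiff p Up k l).2.
set a := phivec phi1 phi2 p n m; set b := phivec phi1 phi2 p (n + 1) m.
have X_step_n k := bwronskian_lax_step_n A B D sol1 sol2 der1 der2 k m.
have X_step_m k := bwronskian_lax_step_m A B D sol1 sol2 der1 der2 Hhg2 k m.
have wr_sq : 4 * p ^+ 2 * delta * s2 ^ (2 * n) * t2 ^ (2 * m)
             = 4 * p ^+ 2 * ((A * D - B ^+ 2) * (a.1 * b.2 - a.2 * b.1) ^+ 2).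
  have -> : a.1 * b.2 - a.2 * b.1 = rho p * s2 ^ n * t2 ^ m := Hrho p Up n m.
  rewrite /delta [2 * n]mulrC [2 * m]mulrC -!exprz_exp.
  by rewrite /s2 /t2; ring.
rewrite wr_sq (_ : alpha ^+ 2 - beta ^+ 2 = s2 - t2); last by rewrite /s2 /t2; ring.
apply: (bform_quartic A B D (g n m) (g (n + 1) m) (h n m)).
- by rewrite /s2 /t2 mulrC Hhg2; ring.
- by rewrite /X !chi_bwronskian X_step_n.
- by rewrite /X !chi_bwronskian X_step_m (phivec_step_m sol1 sol2).
- rewrite /X !chi_bwronskian X_step_m (phivec_step_m sol1 sol2) -[n + 1 + 1]addrA.
  by rewrite (phivec_step_n sol1 sol2).
Qed.
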